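(* Let a project have finite state space $\mathbb{X}$, transition probabilities $p(i,j)$, discount factor $0<\beta\le1$ and horizon $T$. For a tuple $A=(A_1,\dots,A_T)$ of subsets of $\mathbb{X}$ and $1\le d\le T$, $i\in\mathbb{X}$, let $g_d^A(i)=\mathsf{E}_i[\sum_{t=0}^{\tau-1}\beta^t]$ be the expected total discounted time the project is engaged starting in state $i$ with $d$ remaining periods under the stopping rule $\tau$ that, at time $t<d$ engages the project iff $X(t)\in A_{d-t}$, and stops at the first time this fails or when $t=d$; and let $w_d^A(i)=g_d^{A\cup\{(d,i)\}}(i)$, where $A\cup\{(s,j)\}$ denotes the tuple obtained from $A$ by replacing $A_s$ with $A_s\cup\{j\}$. Let $A$ satisfy $A_1\subseteq\dots\subseteq A_T\subseteq\mathbb{X}$. Then for $1\le d\le T$, $i\in\mathbb{X}$: (a) $w_d^A(i)=1+\beta\sum_{j\in A_{d-1}}p(i,j)w_{d-1}^A(j)$ if $d\ge2$, and $w_1^A(i)=1$. (b) $w_d^{A\cup\{(d,i^* )\}}(i)=w_d^A(i)$ for $i^*\in\mathbb{X}\setminus A_d$. (c) $w_d^{A\cup\{(d-1,i^* )\}}(i)=w_d^A(i)+\beta p(i,i^* )w_{d-1}^A(i^* )$ for $i^*\in A_d\setminus A_{d-1}$ (with $d\ge2$). (d) $w_d^{A\cup\{(s,i^* )\}}(i)=1+\beta\sum_{j\in A_{d-1}}p(i,j)w_{d-1}^{A\cup\{(s,i^* )\}}(j)$ for $1\le s\le d-2$ and $i^*\in A_{s+1}\setminus A_s$.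
   Context: $w_d^A(i)$ is the modified work measure: the work measure of the stopping rule with continuation sets $A$, modified so that the project is engaged at least at time 0 in state $i$ with $d$ periods remaining. *)

From HB Require Import structures.
From mathcomp Require Import all_boot all_order all_algebra.
Set Implicit Arguments. Unset Strict Implicit. Unset Printing Implicit Defensive.
Import Order.TTheory GRing.Theory Num.Theory.
Local Open Scope ring_scope.

(* A tuple A = (A_1, ..., A_T) of subsets of the finite state space X is
   represented as a function A : nat -> {set X}; only indices 1..T are used. *)

Definition addAt (X : finType) (A : nat -> {set X}) (s : nat) (j : X) : nat -> {set X} :=
  fun k => if k == s then j |: A k else A k.

(* A trajectory (X(0), ..., X(d-1)) is a d-tuple; x_t = nth i x t. *)
Definition path_prob (R : pzRingType) (X : finType) (p : X -> X -> R)
  (d : nat) (i : X) (x : d.-tuple X) : R :=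
  (nth i x 0 == i)%:R * \prod_(1 <= t < d) p (nth i x t.-1) (nth i x t).

Definition stop_time (X : finType) (A : nat -> {set X}) (d : nat) (i : X)
  (x : d.-tuple X) : nat :=
  \big[minn/d]_(t < d | nth i x t \notin A (d - t)%N) t.

Definition g (R : pzRingType) (X : finType) (p : X -> X -> R) (beta : R)
  (d : nat) (A : nat -> {set X}) (i : X) : R :=
  \sum_(x : d.-tuple X) path_prob p i x * \sum_(t < stop_time A i x) beta ^+ t.

Definition w (R : pzRingType) (X : finType) (p : X -> X -> R) (beta : R)
  (d : nat) (A : nat -> {set X}) (i : X) : R :=
  g p beta d (addAt A d i) i.

From HB Require Import structures.
From mathcomp Require Import all_boot all_order all_algebra.
From mathcomp Require Import ring zify.
Import Order.TTheory GRing.Theory Num.Theory.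
Local Open Scope ring_scope.

(* Conditioning on the first step of the chain gives
   g_(d+1)^A(i) = [i \in A_(d+1)] (1 + beta sum_j p(i,j) g_d^A(j)),
   and g_d^A depends on A only through A_1, ..., A_d.  Hence
   w_(d+1)^A(i) = 1 + beta sum_j p(i,j) g_d^A(j) with g_d^A = [. \in A_d] w_d^A,
   which is (a); w_d^A ignores A_s for s >= d, which gives (b); in (c) the
   only change is one new term in the sum over A_(d-1); in (d) A_(d-1) is
   untouched and (a) applies to A ∪ {(s, istar)}. *)

Lemma big_minn_ord_recl n (P : pred nat) :
  \big[minn/n.+1]_(t < n.+1 | P t) t
  = if P 0%N then 0%N else (\big[minn/n]_(t < n | P t.+1) t).+1.
Proof.
rewrite -(big_mkord P id) -(big_mkord (fun t => P t.+1) id).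
rewrite big_ltn_cond // big_add1 /= min0n.
case: (P 0%N) => //.
by rewrite (big_morph succn (id1 := n.+1) (op1 := minn) (fun x y => esym (minnSS x y))).
Qed.

Lemma nth_tuple_default {T : Type} {n} (x : n.-tuple T) a b t :
  (t < n)%N -> nth a x t = nth b x t.
Proof. by move=> ltn; apply: set_nth_default; rewrite size_tuple. Qed.

Lemma big_tuple_cons (R : nmodType) (T : finType) d (F : d.+1.-tuple T -> R) :
  \sum_(x : d.+1.-tuple T) F x = \sum_(x0 : T) \sum_(y : d.-tuple T) F (cons_tuple x0 y).
Proof.
rewrite pair_big /= (reindex (fun u : T * d.-tuple T => cons_tuple u.1 u.2)) //=.
exists (fun x : d.+1.-tuple T => (thead x, behead_tuple x)) => [[a y] _|x _] /=.
  by congr pair; apply: val_inj.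
by apply: val_inj; case: x => [[|a s]].
Qed.

Lemma sum_eq_indicator {R : pzSemiRingType} {I : finType} (i : I) (G : I -> R) :
  \sum_(x : I) (x == i)%:R * G x = G i.
Proof.
rewrite (eq_bigr (fun x => if x == i then G x else 0)) => [|x _].
  by rewrite -big_mkcond big_pred1_eq.
by case: (x == i); rewrite ?mul1r ?mul0r.
Qed.

Lemma sum_expr_recl (R : pzSemiRingType) (x : R) n :
  \sum_(t < n.+1) x ^+ t = 1 + x * \sum_(t < n) x ^+ t.
Proof.
by rewrite big_ord_recl expr0 big_distrr; congr (_ + _); apply: eq_bigr => t _; rewrite exprS.
Qed.

Section StoppingTime.
Variables (X : finType) (A : nat -> {set X}).

Lemma stop_time_default a b d (y : d.-tuple X) : stop_time A a y = stop_time A b y.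
Proof. by apply: eq_bigl => t; rewrite (nth_tuple_default y a b). Qed.

Lemma stop_time_cons d i x0 (y : d.-tuple X) :
  stop_time A i (cons_tuple x0 y)
  = if x0 \in A d.+1 then (stop_time A i y).+1 else 0%N.
Proof.
rewrite /stop_time /= (big_minn_ord_recl d (fun t => nth i (x0 :: y) t \notin A (d.+1 - t)%N)).
by rewrite /= subn0; case: (x0 \in A d.+1).
Qed.

End StoppingTime.

Lemma addAt_neq (X : finType) (A : nat -> {set X}) s j k : k != s -> addAt A s j k = A k.
Proof. by rewrite /addAt => /negbTE ->. Qed.

Section WorkMeasure.
Variables (R : comPzRingType) (X : finType) (p : X -> X -> R) (beta : R).
Hypothesis stochastic : forall i, \sum_(j : X) p i j = 1.

Lemma path_prob_cons d x0 (y : d.-tuple X) i :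
  path_prob p i (cons_tuple x0 y) = (x0 == i)%:R * \sum_j p x0 j * path_prob p j y.
Proof.
rewrite /path_prob /=; congr (_ * _).
case: d y => [|d] y.
  rewrite big_geq // -{1}(stochastic x0); apply: eq_bigr => j _.
  by rewrite nth_default ?size_tuple // eqxx mul1r big_geq ?mulr1.
rewrite big_ltn // big_add1 /= [RHS](bigD1 (nth i y 0)) //= [X in _ = _ + X]big1 ?addr0; last first.
  by move=> j /negbTE nj; rewrite (nth_tuple_default y j i) // eq_sym nj mul0r mulr0.
rewrite (nth_tuple_default y (nth i y 0) i) // eqxx mul1r; congr (_ * _).
rewrite !big_nat; apply: eq_bigr => -[|t] // /andP[_ ltd] /=.
by rewrite (nth_tuple_default y i (nth i y 0) t) ?(nth_tuple_default y i (nth i y 0) t.+1) // (ltn_trans _ ltd).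
Qed.

Lemma sum_path_prob d j : \sum_(y : d.-tuple X) path_prob p j y = 1.
Proof.
elim: d j => [|d IH] j.
  rewrite (eq_bigr (fun _ => 1)) ?sumr_const ?card_tuple // => y _.
  by rewrite /path_prob nth_default ?size_tuple // eqxx mul1r big_geq.
rewrite big_tuple_cons -[RHS](sum_eq_indicator j (fun _ => 1)); apply: eq_bigr => x0 _.
under eq_bigr do rewrite path_prob_cons.
rewrite -big_distrr /= exchange_big /= -(stochastic x0).
by congr (_ * _); apply: eq_bigr => k _; rewrite -big_distrr /= IH mulr1.
Qed.

Lemma g0 A i : g p beta 0 A i = 0.
Proof. by rewrite /g big1 // => x _; rewrite /stop_time !big_ord0 mulr0. Qed.

Lemma gS A d i :
  g p beta d.+1 A i = (i \in A d.+1)%:R * (1 + beta * \sum_j p i j * g p beta d A j).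
Proof.
rewrite /g big_tuple_cons.
under eq_bigr => x0 _ do under eq_bigr do rewrite path_prob_cons -mulrA.
under eq_bigr do rewrite -big_distrr /=.
rewrite sum_eq_indicator; have [Ai|nAi] := boolP (i \in A d.+1); last first.
  by rewrite mul0r big1 // => y _; rewrite stop_time_cons (negbTE nAi) big_ord0 mulr0.
rewrite mul1r.
under eq_bigr do rewrite stop_time_cons Ai sum_expr_recl big_distrl /=.
rewrite exchange_big big_distrr -{2}(stochastic i) -big_split /=.
apply: eq_bigr => j _.
under eq_bigr do rewrite (stop_time_default _ _ i j) mulrDr mulr1 -mulrA.
rewrite big_split /= -big_distrr /= sum_path_prob mulr1; congr (_ + _).
by rewrite mulrCA !big_distrr /=; apply: eq_bigr => y _; ring.
Qed.

Lemma eq_g_on d A B i : (forall k, (0 < k <= d)%N -> A k = B k) ->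
  g p beta d A i = g p beta d B i.
Proof.
move=> eqAB; apply: eq_bigr => x _.
suff -> : stop_time A i x = stop_time B i x by [].
by apply: eq_bigl => t; rewrite eqAB //; have := ltn_ord t; lia.
Qed.

Lemma wS A d i : w p beta d.+1 A i = 1 + beta * \sum_j p i j * g p beta d A j.
Proof.
rewrite /w gS {1}/addAt eqxx setU11 mul1r.
congr (_ + _ * _); apply: eq_bigr => j _; congr (_ * _).
by apply: eq_g_on => k /andP[_ kd]; rewrite addAt_neq //; lia.
Qed.

Lemma w1 A i : w p beta 1 A i = 1.
Proof. by rewrite wS big1 ?mulr0 ?addr0 // => j _; rewrite g0 mulr0. Qed.

Lemma g_indicator_w A d j : (0 < d)%N -> g p beta d A j = (j \in A d)%:R * w p beta d A j.
Proof. by case: d => // d _; rewrite gS wS. Qed.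

Lemma wS_sum_in A d i : (0 < d)%N ->
  w p beta d.+1 A i = 1 + beta * \sum_(j in A d) p i j * w p beta d A j.
Proof.
move=> d_gt0; rewrite wS [in RHS]big_mkcond /=.
congr (_ + _ * _); apply: eq_bigr => j _.
by rewrite g_indicator_w //; case: (j \in A d); rewrite ?mul1r ?mul0r ?mulr0.
Qed.

Lemma eq_w_on d A B i : (forall k, (0 < k < d)%N -> A k = B k) ->
  w p beta d A i = w p beta d B i.
Proof.
case: d => [|d] eqAB; first by rewrite /w !g0.
rewrite !wS; congr (_ + _ * _); apply: eq_bigr => j _.
by congr (_ * _); apply: eq_g_on.
Qed.

Lemma w_addAt_ge A d s j i : (d <= s)%N -> w p beta d (addAt A s j) i = w p beta d A i.
Proof. by move=> ds; apply: eq_w_on => k /andP[_ kd]; rewrite addAt_neq //; lia. Qed.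

Lemma wS_addAt_notin (A : nat -> {set X}) d istar i : (0 < d)%N -> istar \notin A d ->
  w p beta d.+1 (addAt A d istar) i = w p beta d.+1 A i + beta * p i istar * w p beta d A istar.
Proof.
move=> d_gt0 nAistar; rewrite !wS_sum_in // {1}/addAt eqxx big_setU1 //=.
under eq_bigr do rewrite w_addAt_ge //.
by rewrite w_addAt_ge //; ring.
Qed.

End WorkMeasure.

Theorem lemma2 (R : realFieldType) (X : finType) (p : X -> X -> R) (beta : R)
  (T : nat) (A : nat -> {set X}) :
  (forall i j, 0 <= p i j) ->
  (forall i, \sum_(j : X) p i j = 1) ->
  0 < beta <= 1 ->
  (forall k, (1 <= k < T)%N -> A k \subset A k.+1) ->
  forall (d : nat) (i : X), (1 <= d <= T)%N ->
  [/\ (2 <= d)%N ->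
        w p beta d A i = 1 + beta * \sum_(j in A d.-1) p i j * w p beta d.-1 A j,
      d = 1%N -> w p beta d A i = 1,
      forall istar, istar \notin A d ->
        w p beta d (addAt A d istar) i = w p beta d A i,
      (2 <= d)%N -> forall istar, istar \in A d :\: A d.-1 ->
        w p beta d (addAt A d.-1 istar) i
          = w p beta d A i + beta * p i istar * w p beta d.-1 A istar
    & forall s istar, (1 <= s)%N -> (s <= d - 2)%N -> istar \in A s.+1 :\: A s ->
        w p beta d (addAt A s istar) i
          = 1 + beta * \sum_(j in A d.-1) p i j * w p beta d.-1 (addAt A s istar) j].
Proof.
move=> _ stochastic _ _ [//|d] i _ /=; split.
- by move=> d_gt0; apply: wS_sum_in.
- by case=> ->; apply: w1.
- by move=> istar _; apply: w_addAt_ge.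
- by move=> d_gt0 istar /setDP[_ nAistar]; apply: wS_addAt_notin.
- move=> s istar s_gt0 sd _; rewrite wS_sum_in ?addAt_neq //; lia.
Qed.
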